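(* Let $N,\ell$ be sufficiently large positive integers, and suppose $N$ has a prime factor $p$ with $p>2\ell$. Let $m=10\sqrt{\ell}$, let $a$ be an integer, and let $A=\{a,a+1,\ldots,a+m\}$ (the set of integers $a+j$ with $0\le j\le m$). Then $A$ contains an element $b$ such that $b^\ell \not\equiv 1 \pmod N$. *)

From mathcomp Require Import all_boot all_order all_algebra.
Set Implicit Arguments. Unset Strict Implicit. Unset Printing Implicit Defensive.

From mathcomp Require Import all_boot all_order all_algebra.
From mathcomp Require Import zify ring.
Set Implicit Arguments. Unset Strict Implicit. Unset Printing Implicit Defensive.
Import Order.TTheory GRing.Theory Num.Theory.
Local Open Scope ring_scope.

(* If (a + j)^l = 1 mod N for all j <= m, then a, a + 1, ..., a + m are l-th roots of unity
   in F_p, of which there are at most l < p / 2.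

   If p is small compared with m^2, then for coprime u, v <= m there are i, j <= m with
   v (a + i) = u (a + j), because the integers v i - u j (i, j <= m) fill an interval of length
   at least p; hence u^l = v^l.  The least positive integer n that is not an l-th root of unity
   is a prime with n (n - 1) < p, so n <= m, and comparing n with some y near m / 2 prime to n,
   and y with 1, shows n^l = 1, a contradiction.

   If p is large compared with m^2, every quotient (a + i) / (a + j) is an l-th root of unity.
   The fibres of this quotient map are sets of collinear lattice points, so a value taken more
   than t times is a fraction with numerator and denominator at most m / t.  Counting the
   m^2 + m off-diagonal points by layers then gives (m + 1)^2 < 14 l for the first half of the
   progression, against its length of about 5 sqrt l. *)

Section PrimeCharacteristic.
Variables (R : nzRingType) (p : nat).
Hypothesis pcharRp : p \in [pchar R].

Lemma intr_eq0_small (z : int) : (`|z| < p)%N -> (z%:~R == 0 :> R) = (z == 0).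
Proof.
move=> zp; rewrite -(dvdz_pcharf pcharRp) dvdzE /= -absz_eq0.
apply/idP/eqP => [/dvdn_leq|->]; last exact: dvdn0.
by case: `|z|%N zp => // n /[swap] /(_ isT); rewrite leqNgt => /negbTE ->.
Qed.

Lemma natr_inj_small (i j : nat) :
  (i < p)%N -> (j < p)%N -> (i%:R : R) = j%:R -> i = j.
Proof.
move=> ip jp eij; apply/eqP; rewrite -eqz_nat -subr_eq0 -intr_eq0_small; last by lia.
by rewrite rmorphB /= -!pmulrn eij subrr.
Qed.

Lemma intr_eq_mod (N : nat) (x y : int) :
  (p %| N)%N -> (x == y %[mod N%:Z])%Z -> (x%:~R : R) = y%:~R.
Proof.
rewrite eqz_mod_dvd => pN dvdN_xy.
have : (p%:Z %| x - y)%Z by apply: dvdz_trans dvdN_xy.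
by rewrite (dvdz_pcharf pcharRp) rmorphB /= subr_eq0 => /eqP.
Qed.

End PrimeCharacteristic.

Lemma coprime_dvdz_shift (u v : nat) (X : int) : coprime u v -> (0 < v)%N ->
  exists2 k : nat, (k < v)%N & (v%:Z %| X + u%:Z * k%:Z)%Z.
Proof.
move=> cuv v_gt0; have [w [w' Bez]] := Bezoutz u v.
have {}Bez : w * u%:Z + w' * v%:Z = 1 by rewrite Bez /gcdz /= (eqP cuv).
have v_neq0 : v%:Z != 0 by rewrite eqz_nat -lt0n.
set k := ((- X * w) %% v%:Z)%Z.
have k_ge0 : 0 <= k by exact: modz_ge0.
exists `|k|%N; first by rewrite -ltz_nat gez0_abs // ltz_pmod.
apply/dvdzP; exists (X * w' - u%:Z * ((- X * w) %/ v%:Z)%Z).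
rewrite gez0_abs // /k /modz -[X in X + _]mulr1 -Bez; ring.
Qed.

Section Window.
Variables (u v m : nat).
Hypotheses (cuv : coprime u v) (u_gt0 : (0 < u)%N) (v_gt0 : (0 < v)%N).
Hypotheses (u_le_m : (u <= m)%N) (v_le_m : (v <= m)%N).

Lemma window_nonneg (X : int) : 0 <= X -> X + u%:Z * (v%:Z - 1) <= v%:Z * m%:Z ->
  exists i k : nat, [/\ (i <= m)%N, (k < v)%N & X = v%:Z * i%:Z - u%:Z * k%:Z].
Proof.
move=> X_ge0 X_le; have [k kv /dvdzP [i Ei]] := coprime_dvdz_shift X cuv v_gt0.
have i_ge0 : 0 <= i by nia.
exists `|i|%N, k; split=> //; last by rewrite gez0_abs //; lia.
by rewrite -lez_nat gez0_abs //; nia.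
Qed.

Lemma window_diff (t : int) :
  - (u%:Z * (m%:Z - v%:Z)) <= t -> t <= v%:Z * m%:Z - u%:Z * (v%:Z - 1) ->
  exists i j : nat, [/\ (i <= m)%N, (j <= m)%N & t = v%:Z * i%:Z - u%:Z * j%:Z].
Proof.
move=> t_ge t_le; have [t_ge0 | t_lt0] := lerP 0 t.
  have [|i [k [im kv ->]]] := window_nonneg t_ge0; first by lia.
  by exists i, k; split=> //; lia.
have u_neq0 : u%:Z != 0 by rewrite eqz_nat -lt0n.
have tE := divz_eq t u%:Z; set q := (t %/ u%:Z)%Z in tE; set r := (t %% u%:Z)%Z in tE.
have r_ge0 : 0 <= r by exact: modz_ge0.
have r_lt : r < u%:Z by rewrite ltz_pmod // ltz_nat.
have q_lt0 : q < 0 by nia.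
have q_ge : - (m%:Z - v%:Z) <= q by nia.
have [|i [k [im kv rE]]] := window_nonneg r_ge0; first by nia.
exists i, (k + `|q|)%N; split=> //; first by lia.
by rewrite tE rE PoszD ltz0_abs //; ring.
Qed.

End Window.

Lemma double_half_bounds (m : nat) : (2 * m./2 <= m <= (2 * m./2).+1)%N.
Proof. by rewrite !mul2n -geq_half_double -leq_half_double leqnn. Qed.

Lemma least_nonmember_prime (P : pred nat) (n : nat) :
  (forall x y, P x -> P y -> P (x * y)%N) -> (1 < n)%N -> ~~ P n ->
  (forall k, (0 < k < n)%N -> P k) -> prime n.
Proof.
move=> PM n_gt1 nPn below; apply: contraNT nPn => /primePn [|[d /andP [d_gt1 d_lt] dvd_dn]].
  by rewrite ltnNge n_gt1.
have n_gt0 : (0 < n)%N by lia.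
have d_gt0 : (0 < d)%N by lia.
have q_gt0 : (0 < n %/ d)%N by rewrite divn_gt0 // dvdn_leq.
have q_lt : (n %/ d < n)%N by rewrite ltn_Pdiv.
rewrite -(divnK dvd_dn); apply: PM; apply: below; first by rewrite q_gt0.
by rewrite d_lt andbT; lia.
Qed.

Section LeastNonroot.
Variables (F : fieldType) (p l : nat).
Hypothesis pcharFp : p \in [pchar F].

Lemma exists_small_nonroot : (0 < l)%N -> (l < p.-1)%N ->
  exists c, (0 < c < p)%N && ((c%:R : F) ^+ l != 1).
Proof.
move=> l_gt0 lp; have p_gt0 := prime_gt0 (pcharf_prime pcharFp).
have /hasP [c] : has (fun c => (c%:R : F) ^+ l != 1) (iota 1 p.-1).
  apply: contraTT lp; rewrite -all_predC -leqNgt => /allP /= roots.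
  rewrite -(size_iota 1 p.-1) -(size_map (fun c => c%:R : F)).
  apply: max_unity_roots => //.
    by apply/allP => _ /mapP [c /roots/negPn/eqP c_root ->]; rewrite unity_rootE c_root.
  rewrite map_inj_in_uniq ?iota_uniq // => i j; rewrite !mem_iota.
  by move=> /andP [_ ip] /andP [_ jp]; apply: (natr_inj_small pcharFp); lia.
by rewrite mem_iota => /andP [c_gt0 cp] c_nonroot; exists c; rewrite c_nonroot; lia.
Qed.

Lemma least_nonroot_small (n : nat) : (1 < n < p)%N -> (n%:R : F) ^+ l != 1 ->
  (forall k, (0 < k < n)%N -> (k%:R : F) ^+ l = 1) -> (n * n.-1 < p)%N.
Proof.
move=> /andP [n_gt1 n_lt_p] n_nonroot below.
have pE := divn_eq p n; set q := (p %/ n)%N in pE; set s := (p %% n)%N in pE.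
have s_lt_n : (s < n)%N by rewrite ltn_pmod //; lia.
have s_gt0 : (0 < s)%N.
  rewrite lt0n; apply: contraTneq n_lt_p => s0.
  have n_neq1 : n != 1%N by lia.
  have : (n %| p)%N by rewrite pE s0 addn0 dvdn_mull.
  by move/(prime_nt_dvdP (pcharf_prime pcharFp) n_neq1) ->; rewrite ltnn.
suff : (n <= q.+1)%N by nia.
rewrite leqNgt; apply: contra n_nonroot => q_lt.
have qn : (q.+1%:R * n%:R : F) = (n - s)%:R.
  by rewrite -natrM (_ : (q.+1 * n = p + (n - s))%N) ?natrD ?(pcharf0 pcharFp) ?add0r //; lia.
have q_root : (q.+1%:R : F) ^+ l = 1 by apply: below; lia.
have r_root : ((n - s)%:R : F) ^+ l = 1 by apply: below; lia.
by have := congr1 (fun x => x ^+ l) qn; rewrite /= exprMn q_root r_root mul1r => ->.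
Qed.

Lemma exists_prime_nonroot : (0 < l)%N -> (2 * l < p)%N ->
  exists2 n, prime n & (n * n.-1 < p)%N && ((n%:R : F) ^+ l != 1).
Proof.
move=> l_gt0 lp; have [c /andP [c_range c_nonroot]] := exists_small_nonroot l_gt0 (ltac:(lia)).
have ex_nonroot : exists n, (0 < n)%N && ((n%:R : F) ^+ l != 1).
  by exists c; rewrite c_nonroot andbT; lia.
case: (ex_minnP ex_nonroot) => n /andP [n_gt0 n_nonroot] n_min.
have below k : (0 < k < n)%N -> (k%:R : F) ^+ l = 1.
  move=> /andP [k_gt0 kn]; apply/eqP; apply: contraTT kn => k_nonroot.
  by rewrite -leqNgt n_min ?k_gt0.
have n_gt1 : (1 < n)%N.
  by rewrite ltn_neqAle n_gt0 andbT; apply: contra_neq n_nonroot => <-; rewrite expr1n.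
have n_range : (1 < n < p)%N.
  by rewrite n_gt1; apply: leq_ltn_trans (n_min c _) _; lia.
exists n; last by rewrite n_nonroot (least_nonroot_small n_range n_nonroot below).
apply: (least_nonmember_prime (P := fun k => (k%:R : F) ^+ l == 1)) => //.
  by move=> x y /eqP x_root /eqP y_root; rewrite natrM exprMn x_root y_root mulr1.
by move=> k /below ->.
Qed.

End LeastNonroot.

Section IntegerRatios.
Variables (F : fieldType) (p l m : nat) (A : int).
Hypothesis pcharFp : p \in [pchar F].
Hypothesis AP_root : forall j, (j <= m)%N -> ((A%:~R : F) + j%:R) ^+ l = 1.

(* [(u + v) m + u + 1 - 2 u v] is the length of the interval covered by [window_diff]. *)
Lemma AP_root_ratio (u v : nat) : coprime u v -> (0 < u)%N -> (0 < v)%N ->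
  (u <= m)%N -> (v <= m)%N -> (p + 2 * u * v <= (u + v) * m + u + 1)%N ->
  (u%:R : F) ^+ l = (v%:R : F) ^+ l.
Proof.
move=> cuv u_gt0 v_gt0 um vm p_le.
have p_gt0 : (0 < p)%N := prime_gt0 (pcharf_prime pcharFp).
pose lo := - (u%:Z * (m%:Z - v%:Z)); pose T := (u%:Z - v%:Z) * A.
pose t := lo + ((T - lo) %% p%:Z)%Z.
have [i [j [im jm tE]]] : exists i j : nat,
    [/\ (i <= m)%N, (j <= m)%N & t = v%:Z * i%:Z - u%:Z * j%:Z].
  have r_ge0 : 0 <= ((T - lo) %% p%:Z)%Z by apply: modz_ge0; rewrite eqz_nat -lt0n.
  have r_lt : ((T - lo) %% p%:Z)%Z < p%:Z by rewrite ltz_pmod // ltz_nat.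
  by apply: window_diff => //; rewrite /t /lo; lia.
have tT : (t%:~R : F) = T%:~R.
  apply: (intr_eq_mod pcharFp (dvdnn p)); rewrite eqz_mod_dvd.
  by apply/dvdzP; exists (- ((T - lo) %/ p%:Z)%Z); rewrite /t /modz; ring.
have e : (v%:R * i%:R - u%:R * j%:R - (u%:R - v%:R) * A%:~R : F) = 0.
  by move: tT; rewrite tE /T !rmorphB !rmorphM rmorphB /= -!pmulrn => ->; rewrite subrr.
have key : (v%:R : F) * (A%:~R + i%:R) = u%:R * (A%:~R + j%:R).
  by apply/eqP; rewrite -subr_eq0 -e; apply/eqP; ring.
by have := congr1 (fun x => x ^+ l) key; rewrite /= !exprMn !AP_root // !mulr1.
Qed.

Lemma AP_roots_char_large : (0 < l)%N -> (2 * l < p)%N -> (m * m < 2 * p + 2 * m)%N.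
Proof.
move=> l_gt0 lp; rewrite ltnNge; apply/negP => small_p.
have [n n_prime /andP [n_sq n_nonroot]] := exists_prime_nonroot pcharFp l_gt0 lp.
have [n_gt0 n_gt1] := (prime_gt0 n_prime, prime_gt1 n_prime).
have [y [n_ndvd_y y_ge y_le]] : exists y, [/\ ~~ (n %| y)%N, (m./2 <= y)%N & (y <= m./2.+1)%N].
  have [dvd_h|] := boolP (n %| m./2)%N; last by exists m./2.
  exists m./2.+1; split=> //; rewrite -addn1 dvdn_addr //.
  by apply: contraTN n_gt1; rewrite dvdn1 => /eqP ->.
have m_half := double_half_bounds m.
have m_ge4 : (4 <= m)%N by nia.
have n_le_m : (n <= m)%N by nia.
have [y_gt0 y_le_m] : (0 < y)%N /\ (y <= m)%N by lia.
have y_root : (y%:R : F) ^+ l = 1.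
  by rewrite (AP_root_ratio (u := y) (v := 1)) ?coprimen1 ?mulr1n ?expr1n //; nia.
move: n_nonroot; rewrite (AP_root_ratio (u := n) (v := y)) ?prime_coprime ?y_root ?eqxx //.
nia.
Qed.

End IntegerRatios.

Lemma card_gt_close_pair (n t : nat) (S : {set 'I_n}) : (0 < t)%N -> (t < #|S|)%N ->
  exists x y : 'I_n, [/\ x \in S, y \in S, (x < y)%N & (y <= x + n.-1 %/ t)%N].
Proof.
case: t => // t _ tS; set K := (n.-1 %/ t.+1)%N.
have nK : (n.-1 < t.+1 * K.+1)%N by rewrite mulnC ltn_ceil.
pose bucket (x : 'I_n) : 'I_t.+1 := inord (x %/ K.+1).
have bucketE (x : 'I_n) : bucket x = (x %/ K.+1)%N :> nat.
  by rewrite inordK // ltn_divLR //; have := ltn_ord x; lia.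
have /dinjectivePn [x xS [y /andP [yx yS] same]] : ~~ dinjectiveb bucket S.
  apply: contraTN tS => /dinjectiveP bucket_inj; rewrite -leqNgt.
  by rewrite -(card_in_imset bucket_inj); apply: leq_trans (max_card _) _; rewrite card_ord.
have {same} : (x %/ K.+1 = y %/ K.+1)%N by rewrite -!bucketE same.
have [xE yE] := (divn_eq x K.+1, divn_eq y K.+1).
have [xr yr] : (x %% K.+1 < K.+1)%N /\ (y %% K.+1 < K.+1)%N by rewrite !ltn_pmod.
case: (ltngtP x y) => [xy|yx'|/val_inj exy] same; last by rewrite exy eqxx in yx.
- by exists x, y; split=> //; nia.
- by exists y, x; split=> //; nia.
Qed.

Lemma sum_ltn_ord (r T : nat) : (\sum_(t < T) (t < r)%N)%N = minn r T.
Proof.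
elim: T => [|T IH]; first by rewrite big_ord0 minn0.
by rewrite big_ord_recr /= IH; case: (ltnP T r) => /=; lia.
Qed.

Lemma layer_cake_sum (I : finType) (A : {pred I}) (r : I -> nat) (T : nat) :
  (forall i, i \in A -> r i <= T)%N ->
  (\sum_(i in A) r i = \sum_(t < T) #|[set i in A | t < r i]|)%N.
Proof.
move=> rT; rewrite (eq_bigr (fun i => \sum_(t < T) (t < r i))%N); last first.
  by move=> i iA; rewrite sum_ltn_ord; apply/esym/minn_idPl/rT.
rewrite exchange_big /=; apply: eq_bigr => t _.
by rewrite -big_mkcondr /= -sum1_card; apply: eq_bigl => i; rewrite inE.
Qed.

Lemma sum_sq_divn_le (m s T : nat) : (1 < s)%N ->
  (s.-1 * \sum_(s <= t < T) (m %/ t) ^ 2 <= m ^ 2)%N.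
Proof.
move=> s_gt1; have [sT|Ts] := leqP s T; last by rewrite big_geq ?muln0 // ltnW.
pose f (t : nat) : rat := - (m ^ 2)%:R / t.-1%:R.
have term t : (s <= t < T)%N -> (((m %/ t) ^ 2)%N%:R : rat) <= f t.+1 - f t.
  move=> /andP [st _]; have [t_gt0 t1_gt0] : (0 < t)%N /\ (0 < t.-1)%N by lia.
  have -> : f t.+1 - f t = (m ^ 2)%:R / (t%:R * t.-1%:R).
    rewrite /f /= -(prednK t_gt0) /=; field.
    by apply/andP; split; rewrite ?(addrC 1) ?natr1 pnatr_eq0; lia.
  rewrite ler_pdivlMr ?mulr_gt0 ?ltr0n // -!natrM ler_nat.
  apply: (@leq_trans ((m %/ t * t) ^ 2)); last by rewrite leq_sqr leq_divM.
  by rewrite expnMn -mulnn !leq_mul2l leq_pred !orbT.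
have := ler_sum_nat term; rewrite telescope_sumr // -natr_sum => sum_le.
rewrite -(ler_nat rat) natrM mulrC -ler_pdivlMr ?ltr0n; last by lia.
apply: le_trans sum_le _; rewrite /f !mulNr opprK gerDr oppr_le0.
by rewrite divr_ge0.
Qed.

Lemma normr_le_cross (R : numDomainType) (x y a b : R) :
  x * b = a * y -> `|a| <= `|b| -> b != 0 -> `|x| <= `|y|.
Proof.
move=> xy_ab ab b_neq0; have b_gt0 : 0 < `|b| by rewrite normr_gt0.
rewrite -(ler_pM2r b_gt0) -normrM xy_ab normrM mulrC ler_wpM2l //.
Qed.

Definition small_fraction (F : fieldType) (K : nat) (z : 'I_(2 * K).+1 * 'I_K) : F :=
  (z.1%:Z - K%:Z)%:~R / z.2.+1%:R.

Lemma card_unity_roots_le (F : finFieldType) (l : nat) (S : {set F}) :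
  (0 < l)%N -> {in S, forall x, x ^+ l = 1} -> (#|S| <= l)%N.
Proof.
move=> l_gt0 S_roots; rewrite cardE max_unity_roots ?enum_uniq //.
by apply/allP => x; rewrite mem_enum => /S_roots x_root; rewrite unity_rootE x_root.
Qed.

Section RatiosOfProgression.
Variables (F : finFieldType) (p l m : nat) (a : F).
Hypotheses (pcharFp : p \in [pchar F]) (l_gt0 : (0 < l)%N) (m_small : (2 * (m * m) < p)%N).
Hypothesis AP_root : forall j, (j <= m)%N -> (a + j%:R) ^+ l = 1.

Local Notation point := ('I_m.+1 * 'I_m.+1)%type.

Definition ratio (x : point) : F := (a + x.1%:R) / (a + x.2%:R).

Definition fibre (v : F) : {set point} := [set x | ratio x == v].

Let dz (i j : 'I_m.+1) : int := i%:Z - j%:Z.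

Lemma dz_eq0 (i j : 'I_m.+1) : (dz i j == 0) = (i == j).
Proof. by rewrite subr_eq0 eqz_nat. Qed.

Lemma dz_small (i j : 'I_m.+1) : (`|dz i j| < p)%N.
Proof.
have m_lt_p : (m < p)%N by nia.
by have := ltn_ord i; have := ltn_ord j; rewrite /dz; lia.
Qed.

Lemma AP_neq0 (i : 'I_m.+1) : a + i%:R != 0.
Proof.
apply: contra_eqN (AP_root (ltn_ord i)) => /eqP ->.
by rewrite expr0n gtn_eqF // eq_sym oner_eq0.
Qed.

Lemma ratio_root (x : point) : ratio x ^+ l = 1.
Proof. by rewrite exprMn exprVn !AP_root ?invr1 ?mulr1 // -ltnS. Qed.

Lemma ratio_neq0 (x : point) : ratio x != 0.
Proof.
by apply: contra_eqN (ratio_root x) => /eqP ->; rewrite expr0n gtn_eqF // eq_sym oner_eq0.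
Qed.

Lemma ratio_diff (x y : point) :
  ratio x = ratio y -> ((dz x.1 y.1)%:~R : F) = ratio y * (dz x.2 y.2)%:~R.
Proof.
have mulE (z : point) : a + z.1%:R = ratio z * (a + z.2%:R) by rewrite divfK ?AP_neq0.
move=> exy; rewrite !rmorphB /= -!pmulrn.
have -> : (x.1%:R : F) = ratio y * (a + x.2%:R) - a by rewrite -exy -mulE; ring.
have -> : (y.1%:R : F) = ratio y * (a + y.2%:R) - a by rewrite -mulE; ring.
ring.
Qed.

Lemma ratio_eq_coord (x y : point) :
  ratio x = ratio y -> (x.1 == y.1) = (x.2 == y.2).
Proof.
move=> /ratio_diff exy.
by rewrite -!dz_eq0 -!(intr_eq0_small pcharFp) ?dz_small // exy mulf_eq0 (negbTE (ratio_neq0 y)).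
Qed.

Lemma ratio_eq_snd (x y : point) : ratio x = ratio y -> (x == y) = (x.2 == y.2).
Proof. by case: x y => [? ?] [? ?]; rewrite xpair_eqE => /ratio_eq_coord /= ->; rewrite andbb. Qed.

Lemma ratio_eq_fst (x y : point) : ratio x = ratio y -> (x == y) = (x.1 == y.1).
Proof. by case: x y => [? ?] [? ?]; rewrite xpair_eqE => /ratio_eq_coord /= <-; rewrite andbb. Qed.

Lemma fibre_collinear (v : F) (x y x' y' : point) :
  x \in fibre v -> y \in fibre v -> x' \in fibre v -> y' \in fibre v ->
  dz x.1 y.1 * dz x'.2 y'.2 = dz x'.1 y'.1 * dz x.2 y.2.
Proof.
rewrite !inE => /eqP rx /eqP ry /eqP rx' /eqP ry'.
apply/eqP; rewrite -subr_eq0 -(intr_eq0_small pcharFp); last first.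
  have := ltn_ord x.1; have := ltn_ord x.2; have := ltn_ord y.1; have := ltn_ord y.2.
  have := ltn_ord x'.1; have := ltn_ord x'.2; have := ltn_ord y'.1; have := ltn_ord y'.2.
  rewrite /dz; nia.
rewrite rmorphB !rmorphM /= !ratio_diff ?rx ?ry ?rx' ?ry' //; apply/eqP; ring.
Qed.

Definition small_fractions (K : nat) : {set F} :=
  [set small_fraction F z | z in [set: 'I_(2 * K).+1 * 'I_K]].

Lemma card_small_fractions (K : nat) : (#|small_fractions K| <= 3 * K ^ 2)%N.
Proof. by apply: leq_trans (leq_imset_card _ _) _; rewrite cardsT card_prod !card_ord; nia. Qed.

Lemma fibre_small_fraction (v : F) (K : nat) (x y : point) :
  x \in fibre v -> y \in fibre v -> x.2 != y.2 ->
  `|dz y.1 x.1| <= K%:Z -> `|dz y.2 x.2| <= K%:Z -> v \in small_fractions K.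
Proof.
wlog lt_xy : x y / (x.2 < y.2)%N.
  move=> gen xv yv neq h1 h2; case: (ltngtP x.2 y.2) => [lt|gt|eq]; first exact: (gen x y).
    by apply: (gen y x); rewrite 1?eq_sym // distrC.
  by rewrite (val_inj eq) eqxx in neq.
rewrite !inE => /eqP xv /eqP yv _ sK rK.
have yx := ratio_diff (etrans yv (esym xv)); rewrite xv in yx.
set s := dz y.1 x.1 in sK yx; set r := (y.2 - x.2)%N.
have rE : dz y.2 x.2 = r%:Z by rewrite /dz /r subzn // ltnW.
rewrite rE ger0_norm // lez_nat in rK; rewrite rE -pmulrn in yx.
have r_gt0 : (0 < r)%N by rewrite subn_gt0.
have r_lt_p : (r < p)%N by have := dz_small y.2 x.2; rewrite rE.
have r_neq0 : (r%:R : F) != 0.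
  by rewrite -(dvdn_pcharf pcharFp); apply/negP => /(dvdn_leq r_gt0); lia.
have s_range : (absz (s + K%:Z)%R < (2 * K).+1)%N by rewrite -ltz_nat; lia.
have r_range : (r.-1 < K)%N by lia.
apply/imsetP; exists (Ordinal s_range, Ordinal r_range); rewrite ?inE //.
by rewrite /small_fraction /= prednK // gez0_abs ?addrK ?yx ?mulfK //; lia.
Qed.

Lemma fibre_large_small_fraction (v : F) (t : nat) : (0 < t)%N -> (t < #|fibre v|)%N ->
  v \in small_fractions (m %/ t).
Proof.
move=> t_gt0 t_lt; have fibreP x : x \in fibre v -> ratio x = v by rewrite inE => /eqP.
(* Project the fibre on a coordinate along which it spreads at least as much as along
   the other one. *)
have via (c : point -> 'I_m.+1) : {in fibre v &, injective c} ->
    (forall x y, x \in fibre v -> y \in fibre v ->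
       `|dz y.1 x.1| <= `|dz (c y) (c x)| /\ `|dz y.2 x.2| <= `|dz (c y) (c x)|) ->
    v \in small_fractions (m %/ t).
  move=> c_inj c_dom; have [|i [j]] := card_gt_close_pair t_gt0 (S := c @: fibre v).
    by rewrite card_in_imset.
  case=> /imsetP [x xv ->] /imsetP [y yv ->] cxy cyx; have [d1 d2] := c_dom x y xv yv.
  have cK : `|dz (c y) (c x)| <= (m %/ t)%:Z.
    by move: cyx; rewrite /dz /=; move: (m %/ t)%N => K; lia.
  apply: (fibre_small_fraction xv yv); try exact: le_trans cK.
  rewrite -(ratio_eq_snd (etrans (fibreP x xv) (esym (fibreP y yv)))).
  by apply: contraTneq cxy => ->; rewrite ltnn.
have /card_gt1P [x0 [y0 [x0v y0v x0y0]]] : (1 < #|fibre v|)%N by lia.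
have col x y : x \in fibre v -> y \in fibre v ->
    dz x.1 y.1 * dz x0.2 y0.2 = dz x0.1 y0.1 * dz x.2 y.2.
  by move=> xv yv; exact: fibre_collinear xv yv x0v y0v.
have x0y0v : ratio x0 = ratio y0 by rewrite !fibreP.
have [al_neq0 be_neq0] : dz x0.1 y0.1 != 0 /\ dz x0.2 y0.2 != 0.
  by rewrite !dz_eq0 -(ratio_eq_fst x0y0v) -(ratio_eq_snd x0y0v).
have [ab|ba] := leP `|dz x0.1 y0.1| `|dz x0.2 y0.2|.
- apply: (via snd) => [x y xv yv /= /eqP|x y xv yv]; last first.
    by split=> //; apply: normr_le_cross (col y x yv xv) ab be_neq0.
  by rewrite -ratio_eq_snd ?fibreP // => /eqP.
- apply: (via fst) => [x y xv yv /= /eqP|x y xv yv]; last first.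
    split=> //; apply: normr_le_cross (ltW ba) al_neq0.
    by rewrite mulrC -col // mulrC.
  by rewrite -ratio_eq_fst ?fibreP // => /eqP.
Qed.

Lemma ratio_diag (i : 'I_m.+1) : ratio (i, i) = 1.
Proof. by rewrite /ratio divff ?AP_neq0. Qed.

Lemma card_fibre1 : #|fibre 1| = m.+1.
Proof.
have -> : fibre 1 = [set (i, i) | i : 'I_m.+1].
  apply/setP => x; rewrite inE; apply/eqP/imsetP => [x1|[i _ ->]]; last exact: ratio_diag.
  by exists x.2 => //; apply/eqP; rewrite (ratio_eq_snd (y := (x.2, x.2))) ?ratio_diag /=.
by rewrite card_imset ?card_ord // => i j [].
Qed.

Lemma sum_card_fibre : (\sum_(v in ratio @: [set: point]) #|fibre v| = m.+1 ^ 2)%N.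
Proof.
rewrite -mulnn -[in RHS](card_ord m.+1) -card_prod -cardsT -sum1_card.
rewrite (partition_big_imset ratio) /=; apply: eq_bigr => v _.
by rewrite -sum1_card; apply: eq_bigl => x; rewrite !inE.
Qed.

Definition nontrivial_ratios : {set F} := ratio @: [set: point] :\ 1.

Lemma card_nontrivial_ratios : (#|nontrivial_ratios| <= l.-1)%N.
Proof.
have V1 : 1 \in ratio @: [set: point] by apply/imsetP; exists (ord0, ord0); rewrite ?ratio_diag.
have : (#|ratio @: [set: point]| <= l)%N.
  by apply: card_unity_roots_le => // _ /imsetP [x _ ->]; exact: ratio_root.
by rewrite (cardsD1 1) V1 /= -/nontrivial_ratios; move: #|_| => w; lia.
Qed.

Lemma sum_card_fibre_nontrivial :
  (\sum_(v in nontrivial_ratios) #|fibre v| = m.+1 * m)%N.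
Proof.
have V1 : 1 \in ratio @: [set: point] by apply/imsetP; exists (ord0, ord0); rewrite ?ratio_diag.
have : (m.+1 + \sum_(v in nontrivial_ratios) #|fibre v| = m.+1 ^ 2)%N.
  rewrite -sum_card_fibre (bigD1 1 V1) card_fibre1; congr (_ + _)%N.
  by apply: eq_bigl => v; rewrite !inE andbC.
by move: (\sum_(v in _) _)%N => S; nia.
Qed.

Lemma AP_roots_short_of_char_large : (m.+1 ^ 2 < 14 * l)%N.
Proof.
pose W := nontrivial_ratios; pose T := (m.+1 ^ 2 + 7)%N.
pose N t := #|[set v in W | (t < #|fibre v|)%N]|.
have layers : (m.+1 * m = \sum_(t < T) N t)%N.
  rewrite -sum_card_fibre_nontrivial; apply: layer_cake_sum => v _.
  by apply: leq_trans (max_card _) _; rewrite card_prod card_ord /T; lia.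
have N_le_W t : (N t <= #|W|)%N by apply/subset_leq_card/subsetP => v; rewrite inE => /andP [].
have N_le_small t : (0 < t)%N -> (N t <= 3 * (m %/ t) ^ 2)%N.
  move=> t_gt0; apply: leq_trans (card_small_fractions (m %/ t)).
  apply/subset_leq_card/subsetP => v; rewrite inE => /andP [_].
  exact: fibre_large_small_fraction.
have split_sum : (\sum_(t < T) N t = \sum_(0 <= t < 7) N t + \sum_(7 <= t < T) N t)%N.
  by rewrite -(big_mkord xpredT) (big_cat_nat _ (n := 7)) //; lia.
have head : (\sum_(0 <= t < 7) N t <= 7 * #|W|)%N.
  by rewrite -[7%N]subn0 -sum_nat_const_nat; apply: leq_sum => t _.
have tail : (\sum_(7 <= t < T) N t <= 3 * \sum_(7 <= t < T) (m %/ t) ^ 2)%N.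
  by rewrite big_distrr /= !big_nat; apply: leq_sum => t /andP [t_ge7 _]; apply: N_le_small; lia.
have tail_sq := sum_sq_divn_le m T (ltac:(lia) : (1 < 7)%N).
have := card_nontrivial_ratios; rewrite -/W; nia.
Qed.

End RatiosOfProgression.

Lemma AP_roots_short (F : finFieldType) (p l m : nat) (A : int) :
  p \in [pchar F] -> (0 < l)%N -> (2 * l < p)%N ->
  (forall j, (j <= m)%N -> ((A%:~R : F) + j%:R) ^+ l = 1) -> (m.+1 ^ 2 <= 100 * l)%N.
Proof.
move=> pcharFp l_gt0 lp AP_root.
have p_large := AP_roots_char_large pcharFp AP_root l_gt0 lp.
have m_half := double_half_bounds m.
(* Use only the first half of the progression, so that [2 k^2 < p] follows from [p_large]. *)
pose k := (m./2).-1.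
have k_small : (2 * (k * k) < p)%N by rewrite /k; nia.
have k_root j : (j <= k)%N -> ((A%:~R : F) + j%:R) ^+ l = 1.
  by move=> jk; apply: AP_root; rewrite /k in jk; lia.
have := AP_roots_short_of_char_large pcharFp l_gt0 k_small k_root.
rewrite /k; nia.
Qed.

Lemma isqrt_spec (n : nat) : exists m, (m * m <= n < m.+1 * m.+1)%N.
Proof.
elim: n => [|n [m /andP [m_le n_lt]]]; first by exists 0%N.
have [m1_le|n1_lt] := leqP (m.+1 * m.+1) n.+1; first by exists m.+1; rewrite m1_le /=; nia.
by exists m; rewrite n1_lt andbT; lia.
Qed.

Theorem claim2p5 :
  exists N0 L0 : nat,
    forall (N l p : nat) (a : int),
      (N0 <= N)%N -> (L0 <= l)%N ->
      prime p -> (p %| N)%N -> (2 * l < p)%N ->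
      exists j : nat,
        (j * j <= 100 * l)%N /\
        ((a + j%:Z) ^+ l != 1 %[mod N%:Z])%Z.
Proof.
exists 0%N, 1%N => N l p a _ l_gt0 p_prime p_dvd_N lp.
have [m /andP [mm_le lt_m1m1]] := isqrt_spec (100 * l).
have [j j_nonroot|all_roots] := pickP (fun j : 'I_m.+1 => (a + j%:Z) ^+ l != 1 %[mod N%:Z])%Z.
  by exists j; split=> //; apply: leq_trans mm_le; apply: leq_mul; rewrite -ltnS.
have AP_root j : (j <= m)%N -> ((a%:~R : 'F_p) + j%:R) ^+ l = 1.
  rewrite -ltnS => jm; have /negbFE := all_roots (Ordinal jm).
  move/(intr_eq_mod (pchar_Fp p_prime) p_dvd_N).
  by rewrite rmorphXn rmorphD /= -pmulrn.
have := AP_roots_short (pchar_Fp p_prime) l_gt0 lp AP_root.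
by rewrite leqNgt -mulnn lt_m1m1.
Qed.
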